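(* Let $(T_1,T_2)$ be an ordered binary forest on $\{1,\dots,m-1\}$, let $x_i=|L(T_i)|$ for $i=1,2$, and assume $x_1\ge x_2$. Let $T_0$ be the binary phylogenetic tree on $\{1,\dots,m\}$ with root $z$ having children $a$ and the leaf $m$, where $a$ has children the roots of $T_1$ and $T_2$. Let $T$ be a binary phylogenetic tree with $n$ leaves having $T_0$ as the subtree rooted at some node. If $\Phi(T)$ is minimum among all binary phylogenetic trees with $n$ leaves, then $x_1=x_2=1$.
   Context: A phylogenetic tree on a finite set $S$ is a rooted tree whose leaves are bijectively labeled by $S$, every internal node having at least two children; binary means exactly two children; a tree with $n$ leaves is one on $\{1,\dots,n\}$. $L(T)$ is the leaf set. An ordered binary $k$-forest on $S$ is a sequence of $k$ binary phylogenetic trees on pairwise disjoint sets with union $S$. The subtree rooted at a node $v$ is the subgraph induced on the descendants of $v$. The depth $\delta_T(v)$ is the number of arcs from the root to $v$; for leaves $i\ne j$, $\varphi_T(i,j)=\delta_T(LCA_T(i,j))$ ($LCA$ = lowest common ancestor), and $\Phi(T)$ is the sum of $\varphi_T(i,j)$ over all unordered pairs of distinct leaves. *)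

From mathcomp Require Import all_boot.
Set Implicit Arguments. Unset Strict Implicit. Unset Printing Implicit Defensive.

(* Rooted binary trees with nat-labelled leaves (children ordered only for
   representation; rooted-tree identity is taken up to swapping children). *)
Inductive btree := BLeaf of nat | BNode of btree & btree.

Fixpoint leaves (t : btree) : seq nat :=
  match t with BLeaf i => [:: i] | BNode l r => leaves l ++ leaves r end.

Definition phylo_on (S : seq nat) (t : btree) : Prop :=
  uniq (leaves t) /\ perm_eq (leaves t) S.

Definition tree_on (n : nat) (t : btree) : Prop := phylo_on (iota 1 n) t.

Definition forest2_on (S : seq nat) (t1 t2 : btree) : Prop :=
  uniq (leaves t1 ++ leaves t2) /\ perm_eq (leaves t1 ++ leaves t2) S.

Fixpoint lca_depth (t : btree) (i j : nat) : nat :=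
  match t with
  | BLeaf _ => 0
  | BNode l r =>
      if (i \in leaves l) && (j \in leaves l) then (lca_depth l i j).+1
      else if (i \in leaves r) && (j \in leaves r) then (lca_depth r i j).+1
      else 0
  end.

Definition Phi (t : btree) : nat :=
  \sum_(i <- leaves t) \sum_(j <- leaves t | i < j) lca_depth t i j.

Fixpoint teq (a b : btree) : bool :=
  match a, b with
  | BLeaf i, BLeaf j => i == j
  | BNode a1 a2, BNode b1 b2 => (teq a1 b1 && teq a2 b2) || (teq a1 b2 && teq a2 b1)
  | _, _ => false
  end.

Fixpoint is_subtree (s t : btree) : bool :=
  teq s t || match t with BLeaf _ => false | BNode l r => is_subtree s l || is_subtree s r end.

From mathcomp Require Import all_boot.
From mathcomp Require Import zify.
Set Implicit Arguments. Unset Strict Implicit.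

(* Every pair of leaves i < j of T = (l, r) either lies on one side, where its
   LCA sits one level deeper than in that side, or is split, with LCA at the
   root.  Summing, Phi(l, r) = Phi l + Phi r + C(|l|,2) + C(|r|,2), so Phi(T)
   is the purely structural [cost T]: the sum of C(|L(v)|,2) over the non-root
   nodes v.  Such a cost is additive over subtrees, hence replacing a subtree
   by one with the same leaves and smaller cost yields a tree with the same
   leaves and smaller Phi.  The rotation ((T1,T2),m) -> (T1,(T2,m)) trades the
   node of size x1 + x2 for one of size x2 + 1, which is strictly cheaper as
   soon as x1 >= 2.  So in a Phi-minimal tree x1 = 1, and then x2 = 1 since
   1 <= x2 <= x1.  The cost comparison needs no disjointness. *)

Definition pair_sum (s : seq nat) (f : nat -> nat -> nat) : nat :=
  \sum_(i <- s) \sum_(j <- s | i < j) f i j.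

Lemma PhiE (t : btree) : Phi t = pair_sum (leaves t) (lca_depth t).
Proof. by []. Qed.

Lemma pair_sum_eq_in (s : seq nat) (f g : nat -> nat -> nat) :
  {in s &, f =2 g} -> pair_sum s f = pair_sum s g.
Proof.
move=> fg; rewrite /pair_sum; apply: eq_big_seq => i si; rewrite big_mkcond [RHS]big_mkcond.
by apply: eq_big_seq => j sj; rewrite fg.
Qed.

Lemma pair_sum_add (s : seq nat) (f g : nat -> nat -> nat) :
  pair_sum s (fun i j => f i j + g i j) = pair_sum s f + pair_sum s g.
Proof. by rewrite /pair_sum -big_split; apply: eq_bigr => i _; rewrite big_split. Qed.

Lemma pair_sum_cat (s1 s2 : seq nat) (f : nat -> nat -> nat) :
  (forall i j, i \in s1 -> j \in s2 -> f i j = 0 /\ f j i = 0) ->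
  pair_sum (s1 ++ s2) f = pair_sum s1 f + pair_sum s2 f.
Proof.
move=> cross; rewrite /pair_sum big_cat /=; congr (_ + _); apply: eq_big_seq => i si.
- rewrite big_cat /= [X in _ + X]big1_seq ?addn0 // => j /andP[_ sj].
  exact: (cross i j si sj).1.
- rewrite big_cat /= big1_seq ?add0n // => j /andP[_ sj].
  exact: (cross j i sj si).2.
Qed.

Lemma count_above_below (x : nat) (s : seq nat) : x \notin s ->
  count (fun j => x < j) s + \sum_(i <- s) (i < x : nat) = size s.
Proof.
elim: s => [|y s IH]; first by rewrite big_nil.
rewrite inE negb_or => /andP[xy xs]; rewrite big_cons /= -(IH xs).
by case: (ltngtP x y) xy => //= _ _; lia.
Qed.

Lemma pair_count (s : seq nat) : uniq s -> pair_sum s (fun _ _ => 1) = 'C(size s, 2).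
Proof.
have countE r : pair_sum r (fun _ _ => 1) = \sum_(i <- r) count (fun j => i < j) r.
  by apply: eq_bigr => i _; rewrite sum1_count.
elim: s => [|x s IH]; first by rewrite /pair_sum big_nil.
move=> /= /andP[xs us]; rewrite binS bin1 -(IH us) !countE big_cons /= ltnn add0n.
rewrite (eq_bigr (fun i => (i < x : nat) + count (fun j => i < j) s)) //.
by rewrite big_split /= addnA (count_above_below xs) addnC.
Qed.

Fixpoint cost (t : btree) : nat :=
  match t with
  | BLeaf _ => 0
  | BNode l r => cost l + cost r + 'C(size (leaves l), 2) + 'C(size (leaves r), 2)
  end.

Lemma Phi_node (l r : btree) : uniq (leaves l ++ leaves r) ->
  Phi (BNode l r) = Phi l + Phi r + 'C(size (leaves l), 2) + 'C(size (leaves r), 2).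
Proof.
rewrite cat_uniq => /and3P[ul /hasPn disj ur].
have notl j : j \in leaves r -> j \notin leaves l by move/disj.
have notr i : i \in leaves l -> i \notin leaves r.
  by move=> il; apply/negP => /notl; rewrite il.
rewrite !PhiE /= pair_sum_cat; last first.
  move=> i j il jr /=.
  by rewrite il (negbTE (notl j jr)) (negbTE (notr i il)) !andbF.
rewrite (@pair_sum_eq_in (leaves l) _ (fun i j => lca_depth l i j + 1)); last first.
  by move=> i j il jl /=; rewrite il jl addn1.
rewrite (@pair_sum_eq_in (leaves r) _ (fun i j => lca_depth r i j + 1)); last first.
  by move=> i j ir jr /=; rewrite (negbTE (notl i ir)) ir jr addn1.
by rewrite !pair_sum_add !pair_count //; lia.
Qed.

Lemma Phi_cost (t : btree) : uniq (leaves t) -> Phi t = cost t.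
Proof.
elim: t => [i|l IHl r IHr].
  by rewrite PhiE /pair_sum /= big_seq1 big_mkcond big_seq1 ltnn.
move=> u; rewrite Phi_node //=.
by move: u; rewrite cat_uniq => /and3P[ul _ ur]; rewrite IHl // IHr.
Qed.

Lemma teq_cost (s t : btree) :
  teq s t -> perm_eq (leaves s) (leaves t) /\ cost s = cost t.
Proof.
elim: s t => [i|a1 IH1 a2 IH2] [j|b1 b2] //=; first by move/eqP ->.
case/orP => /andP[/IH1[p1 c1] /IH2[p2 c2]]; rewrite c1 c2 (perm_size p1) (perm_size p2).
- by split; first exact: perm_cat.
- by split; [rewrite perm_catC; exact: perm_cat | rewrite [cost b2 + _]addnC addnAC].
Qed.

Lemma subtree_replace (s s' t : btree) :
  is_subtree s t -> perm_eq (leaves s') (leaves s) -> cost s' < cost s ->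
  exists t', perm_eq (leaves t') (leaves t) /\ cost t' < cost t.
Proof.
move=> + ps cs; elim: t => [i|l IHl r IHr] /=.
  rewrite orbF => /teq_cost[p c]; exists s'.
  by split; [exact: perm_trans p | move: cs; rewrite c].
case/orP => [/teq_cost[p c] | /orP[/IHl[l' [p c]] | /IHr[r' [p c]]]].
- by exists s'; split; [exact: perm_trans p | move: cs; rewrite c].
- exists (BNode l' r); rewrite /= (perm_size p).
  by split; [exact: perm_cat | rewrite !ltn_add2r].
- exists (BNode l r'); rewrite /= (perm_size p).
  by split; [exact: perm_cat | rewrite !ltn_add2r ltn_add2l].
Qed.

Lemma leaves_nonempty (t : btree) : 0 < size (leaves t).
Proof. by elim: t => [//|l IHl r IHr]; rewrite /= size_cat; lia. Qed.

Lemma ltn_bin2 (k1 k2 : nat) : 0 < k1 -> k1 < k2 -> 'C(k1, 2) < 'C(k2, 2).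
Proof.
move=> k1_pos lt12; have := leq_bin2l 2 lt12.
by rewrite binS bin1; lia.
Qed.

Lemma rotation_cost (a b c : btree) : size (leaves c) < size (leaves a) ->
  cost (BNode a (BNode b c)) < cost (BNode (BNode a b) c).
Proof.
move=> ca; rewrite /= !size_cat.
have : 'C(size (leaves b) + size (leaves c), 2) < 'C(size (leaves a) + size (leaves b), 2).
  by apply: ltn_bin2; have := leaves_nonempty b; lia.
lia.
Qed.

Theorem mainTheorem9 (m n : nat) (T1 T2 T : btree) :
  forest2_on (iota 1 m.-1) T1 T2 ->
  size (leaves T2) <= size (leaves T1) ->
  tree_on n T ->
  is_subtree (BNode (BNode T1 T2) (BLeaf m)) T ->
  (forall T' : btree, tree_on n T' -> Phi T <= Phi T') ->
  size (leaves T1) = 1 /\ size (leaves T2) = 1.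
Proof.
move=> _ x2_le_x1 [uT pT] sub minT.
have x2_pos := leaves_nonempty T2.
suff : size (leaves T1) <= 1 by lia.
rewrite leqNgt; apply/negP => x1_gt1.
have rot := @rotation_cost T1 T2 (BLeaf m) x1_gt1.
have rot_leaves : perm_eq (leaves (BNode T1 (BNode T2 (BLeaf m))))
                          (leaves (BNode (BNode T1 T2) (BLeaf m))) by rewrite /= catA.
have [T' [pT' cT']] := subtree_replace sub rot_leaves rot.
have uT' : uniq (leaves T') by rewrite (perm_uniq pT').
have := minT T' (conj uT' (perm_trans pT' pT)).
by rewrite (Phi_cost uT) (Phi_cost uT') leqNgt cT'.
Qed.
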